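(* Let $n$ be a positive integer and $\alpha,\beta\in\mathbb{R}$. Put $M=T_n\cdot\max\{1,n^{2\beta}\}\cdot\max_{1\le i\le n}|J_{\alpha-\beta}(i)|$. Then every eigenvalue of $A_n^{\alpha,\beta}$ lies in the real interval \[ \Big[\,2\min\{1,n^{\alpha+\beta}\}-M\ ,\ M\,\Big]. \]
   Context: For $i,j$ positive integers, $(i,j)$ denotes the greatest common divisor and $[i,j]$ the least common multiple. For $\alpha,\beta\in\mathbb{R}$ and a positive integer $n$, $A_n^{\alpha,\beta}$ is the $n\times n$ real matrix with $(i,j)$ entry $(i,j)^{\alpha}[i,j]^{\beta}$. $E_n$ is the $n\times n$ matrix with $(E_n)_{ij}=1$ if $j\mid i$ and $(E_n)_{ij}=0$ otherwise; $t_n$ denotes the smallest eigenvalue and $T_n$ the largest eigenvalue of the symmetric matrix $E_n^{T}E_n$. For real $s$, $J_s$ is the arithmetical function $J_s(k)=k^{s}\prod_{p\mid k}\left(1-p^{-s}\right)$ (product over primes $p$ dividing $k$), equivalently $J_s(k)=\sum_{d\mid k} d^{s}\mu(k/d)$ where $\mu$ is the Möbius function. *)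

From Stdlib Require Import Reals Arith ZArith Znumtheory.
Open Scope R_scope.

Fixpoint rsum (n : nat) (f : nat -> R) : R :=
  match n with 0%nat => 0 | S m => rsum m f + f (S m) end.

Fixpoint rprod (n : nat) (f : nat -> R) : R :=
  match n with 0%nat => 1 | S m => rprod m f * f (S m) end.

(* max_{1<=k<=n} f k, for nonnegative f (value 0 when n = 0) *)
Fixpoint rmaxn (n : nat) (f : nat -> R) : R :=
  match n with 0%nat => 0 | S m => Rmax (rmaxn m f) (f (S m)) end.

(* n x n real matrices, indices 1..n *)
Definition rmat := nat -> nat -> R.

Definition is_eigenvalue (n : nat) (A : rmat) (lam : R) : Prop :=
  exists x : nat -> R,
    (exists i, (1 <= i <= n)%nat /\ x i <> 0) /\
    forall i, (1 <= i <= n)%nat -> rsum n (fun j => A i j * x j) = lam * x i.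

Definition is_largest_eigenvalue (n : nat) (A : rmat) (T : R) : Prop :=
  is_eigenvalue n A T /\ forall mu, is_eigenvalue n A mu -> mu <= T.

Definition Amat (alpha beta : R) : rmat :=
  fun i j => Rpower (INR (Nat.gcd i j)) alpha * Rpower (INR (Nat.lcm i j)) beta.

Definition Emat : rmat :=
  fun i j => if Nat.eqb (i mod j) 0 then 1 else 0.

Definition EtE (n : nat) : rmat :=
  fun i j => rsum n (fun k => Emat k i * Emat k j).

Definition Jordan (s : R) (k : nat) : R :=
  Rpower (INR k) s *
  rprod k (fun p => if prime_dec (Z.of_nat p) then
                      (if Nat.eqb (k mod p) 0 then 1 - Rpower (INR p) (- s) else 1)
                    else 1).

Set Warnings "-notation-overridden,-ambiguous-paths,-notation-incompatible-prefix".
From Stdlib Require Import Reals Lra Lia ZArith Znumtheory.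
From mathcomp Require Import all_boot ssralg matrix zify.
From mathcomp Require Import Rstruct.
Open Scope R_scope.
Set Bullet Behavior "Strict Subproofs".

(* Write s = alpha - beta, D = diag(i^beta) and J = diag(J_s(k)).  Gauss'
   identity  sum_{k | m} J_s(k) = m^s  together with (i,j)[i,j] = i j gives the
   factorization  A = D E J E^T D,  hence for every vector u
       <u, A u> = sum_k J_s(k) (E^T D u)_k^2
               <= max|J_s| |E^T D u|^2 <= max|J_s| T_n |D u|^2 <= M |u|^2,
   where |E^T z|^2 <= T_n |z|^2 because T_n, the largest eigenvalue of E^T E,
   bounds its quadratic form (Rayleigh).  If A x = lam x with x <> 0, the
   matrix A - m0 I, m0 = min(1, n^(alpha+beta)), has nonnegative entries, so
   |lam - m0| | |x| |^2 <= <|x|, (A - m0 I) |x|> <= (M - m0) | |x| |^2, which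
   is the claimed two-sided bound. *)

Local Notation inrange n i := (1 <= i /\ i <= n)%coq_nat.

Lemma rsum_ext (n : nat) (f g : nat -> R) :
  (forall k, inrange n k -> f k = g k) -> rsum n f = rsum n g.
Proof.
elim: n => [|n IH] Hfg //=.
rewrite IH ?Hfg //; [lia|] => k Hk; apply: Hfg; lia.
Qed.

Lemma rsum_plus (n : nat) (f g : nat -> R) :
  rsum n (fun k => f k + g k) = rsum n f + rsum n g.
Proof. elim: n => [|n IH] /=; [lra|rewrite IH; lra]. Qed.

Lemma rsum_scal (n : nat) (c : R) (f : nat -> R) :
  rsum n (fun k => c * f k) = c * rsum n f.
Proof. elim: n => [|n IH] /=; [lra|rewrite IH; lra]. Qed.

Lemma rsum_scalr (n : nat) (c : R) (f : nat -> R) :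
  rsum n (fun k => f k * c) = rsum n f * c.
Proof. elim: n => [|n IH] /=; [lra|rewrite IH; lra]. Qed.

Lemma rsum_zero (n : nat) : rsum n (fun _ => 0) = 0.
Proof. elim: n => [|n IH] /=; [|rewrite IH]; lra. Qed.

Lemma rsum_le (n : nat) (f g : nat -> R) :
  (forall k, inrange n k -> f k <= g k) -> rsum n f <= rsum n g.
Proof.
elim: n => [|n IH] Hfg /=; first lra.
have := IH (fun k Hk => Hfg k ltac:(lia)); have := Hfg n.+1 ltac:(lia); lra.
Qed.

Lemma rsum_nonneg (n : nat) (f : nat -> R) :
  (forall k, inrange n k -> 0 <= f k) -> 0 <= rsum n f.
Proof.
by move=> Hf; rewrite -(rsum_zero n); apply: rsum_le.
Qed.

Lemma rsum_ge_term (n i : nat) (f : nat -> R) :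
  (forall k, inrange n k -> 0 <= f k) -> inrange n i -> f i <= rsum n f.
Proof.
elim: n => [|n IH] Hf Hi /=; first lia.
case: (Nat.eq_dec i n.+1) => [->|Hne].
- have := rsum_nonneg n f (fun k Hk => Hf k ltac:(lia)); lra.
- have := IH (fun k Hk => Hf k ltac:(lia)) ltac:(lia); have := Hf n.+1 ltac:(lia); lra.
Qed.

Lemma rsum_swap (n m : nat) (f : nat -> nat -> R) :
  rsum n (fun i => rsum m (fun j => f i j)) = rsum m (fun j => rsum n (fun i => f i j)).
Proof.
elim: n => [|n IH] /=; last by rewrite IH rsum_plus.
by elim: m => [|m IH] /=; [|rewrite -IH]; lra.
Qed.

Lemma rsum_abs (n : nat) (f : nat -> R) : Rabs (rsum n f) <= rsum n (fun k => Rabs (f k)).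
Proof.
elim: n => [|n IH] /=; first by rewrite Rabs_R0; lra.
apply: Rle_trans (Rabs_triang _ _) _; lra.
Qed.

Lemma rsum_extend (N m : nat) (f : nat -> R) :
  (m <= N)%coq_nat -> (forall k, (m < k)%coq_nat -> f k = 0) -> rsum N f = rsum m f.
Proof.
move=> HmN Hf; elim: HmN => [|N' HmN IH] //=.
rewrite IH Hf; [lra|lia].
Qed.

Lemma rsum_add (a b : nat) (f : nat -> R) :
  rsum (a + b) f = rsum a f + rsum b (fun i => f (a + i)%N).
Proof.
elim: b => [|b IH] /=; first by rewrite addn0; lra.
by rewrite addnS /= IH; lra.
Qed.

Definition idm : rmat := fun i j => if Nat.eqb i j then 1 else 0.

Lemma idm_sym (i j : nat) : idm i j = idm j i.
Proof. by rewrite /idm Nat.eqb_sym. Qed.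

Lemma rsum_idm (n i : nat) (b : nat -> R) :
  inrange n i -> rsum n (fun j => idm i j * b j) = b i.
Proof.
elim: n => [|n IH] Hi /=; first lia.
rewrite /idm; case: (Nat.eqb_spec i n.+1) => [->|Hne].
- rewrite (rsum_ext n _ (fun _ => 0)) ?rsum_zero; first lra.
  by move=> k Hk; case: (Nat.eqb_spec n.+1 k) => [|_]; [lia|lra].
- rewrite [X in X + _](IH ltac:(lia)); lra.
Qed.

Definition mulmv (n : nat) (B : rmat) (b : nat -> R) (i : nat) : R :=
  rsum n (fun j => B i j * b j).
Definition dot (n : nat) (a b : nat -> R) : R := rsum n (fun i => a i * b i).
Definition sqnorm (n : nat) (w : nat -> R) : R := dot n w w.
Definition bform (n : nat) (B : rmat) (a b : nat -> R) : R := dot n a (mulmv n B b).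
Definition symmetric (n : nat) (B : rmat) : Prop :=
  forall i j, inrange n i -> inrange n j -> B i j = B j i.

Lemma sqnorm_nonneg (n : nat) (w : nat -> R) : 0 <= sqnorm n w.
Proof. by apply: rsum_nonneg => k _; nra. Qed.

Lemma sqnorm_coord (n i : nat) (w : nat -> R) : inrange n i -> w i * w i <= sqnorm n w.
Proof. by apply: (rsum_ge_term n i (fun k => w k * w k)) => k _; nra. Qed.

Lemma sqnorm_scal (n : nat) (c : R) (w : nat -> R) :
  sqnorm n (fun i => c * w i) = c * c * sqnorm n w.
Proof. by rewrite /sqnorm /dot -rsum_scal; apply: rsum_ext => k _; ring. Qed.

Lemma unit_coord (n i : nat) (w : nat -> R) :
  sqnorm n w = 1 -> inrange n i -> Rabs (w i) <= 1.
Proof.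
move=> Hw Hi; have := sqnorm_coord n i w Hi; rewrite Hw => H.
have Hsq : Rabs (w i) * Rabs (w i) = w i * w i by rewrite -Rabs_mult Rabs_right; nra.
have := Rabs_pos (w i); nra.
Qed.

Definition e1 : nat -> R := idm 1%nat.

Lemma sqnorm_e1 (n : nat) : (1 <= n)%coq_nat -> sqnorm n e1 = 1.
Proof. by move=> Hn; rewrite /sqnorm /dot rsum_idm /e1 /idm //=; lra. Qed.

Lemma bform_idm (n : nat) (a b : nat -> R) : bform n idm a b = dot n a b.
Proof. by apply: rsum_ext => i Hi; rewrite /mulmv rsum_idm. Qed.

Lemma bform_linl (n : nat) (B : rmat) (a b c : nat -> R) (t : R) :
  bform n B (fun i => a i + t * b i) c = bform n B a c + t * bform n B b c.
Proof. by rewrite /bform /dot -rsum_scal -rsum_plus; apply: rsum_ext => k _; ring. Qed.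

Lemma bform_sym (n : nat) (B : rmat) (a b : nat -> R) :
  symmetric n B -> bform n B a b = bform n B b a.
Proof.
move=> HB; rewrite /bform /dot /mulmv.
under rsum_ext => i _ do rewrite -rsum_scal.
rewrite rsum_swap; apply: rsum_ext => j Hj.
rewrite -rsum_scal; apply: rsum_ext => i Hi; rewrite (HB i j) //; ring.
Qed.

Lemma bform_line (n : nat) (B : rmat) (a b : nat -> R) (t : R) :
  symmetric n B ->
  bform n B (fun i => a i + t * b i) (fun i => a i + t * b i) =
  bform n B a a + 2 * t * bform n B a b + t * t * bform n B b b.
Proof.
move=> HB; rewrite bform_linl !(bform_sym n B _ (fun i => a i + t * b i)) //.
rewrite !bform_linl (bform_sym n B b a) //; ring.
Qed.

(* Cauchy-Schwarz for a positive semidefinite symmetric bilinear form: a real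
   quadratic polynomial in t that is everywhere nonnegative. *)
Lemma bform_CS (n : nat) (B : rmat) (a b : nat -> R) :
  symmetric n B -> (forall w, 0 <= bform n B w w) ->
  bform n B a b * bform n B a b <= bform n B a a * bform n B b b.
Proof.
move=> HB Hpos.
set al := bform n B a a; set be := bform n B a b; set ga := bform n B b b.
have Hline t : 0 <= al + 2 * t * be + t * t * ga by rewrite -bform_line //.
have Ha : 0 <= al by apply: Hpos.
case: (Rle_lt_or_eq_dec 0 ga (Hpos b)) => [Hg|Hg0].
- have := Hline (- be / ga).
  have -> : al + 2 * (- be / ga) * be + - be / ga * (- be / ga) * ga = (al * ga - be * be) / ga
    by field; lra.
  move=> H; have := Rmult_le_compat_r ga _ _ (Rlt_le _ _ Hg) H.
  rewrite /Rdiv Rmult_assoc Rinv_l; lra.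
- rewrite -Hg0 Rmult_0_r; case: (Req_dec be 0) => [->|Hb]; first lra.
  have := Hline (- (al + 1) / (2 * be)); rewrite -Hg0 Rmult_0_r.
  have -> : al + 2 * (- (al + 1) / (2 * be)) * be = -1 by field.
  lra.
Qed.

Lemma dot_CS (n : nat) (a b : nat -> R) :
  dot n a b * dot n a b <= sqnorm n a * sqnorm n b.
Proof.
rewrite /sqnorm -!bform_idm; apply: bform_CS => [i j _ _|w]; first exact: idm_sym.
by rewrite bform_idm; apply: sqnorm_nonneg.
Qed.

Definition idm_comb (a c : R) (B : rmat) : rmat := fun i j => a * idm i j + c * B i j.

Lemma mulmv_idm_comb (n i : nat) (a c : R) (B : rmat) (b : nat -> R) :
  inrange n i -> mulmv n (idm_comb a c B) b i = a * b i + c * mulmv n B b i.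
Proof.
move=> Hi; rewrite /mulmv -rsum_scal -(rsum_idm n i (fun j => a * b j)) // -rsum_plus.
by apply: rsum_ext => j _; rewrite /idm_comb; ring.
Qed.

Lemma bform_idm_comb (n : nat) (a c : R) (B : rmat) (u v : nat -> R) :
  bform n (idm_comb a c B) u v = a * dot n u v + c * bform n B u v.
Proof.
rewrite /bform /dot -!rsum_scal -rsum_plus; apply: rsum_ext => i Hi.
by rewrite mulmv_idm_comb //; ring.
Qed.

Lemma symmetric_idm_comb (n : nat) (a c : R) (B : rmat) :
  symmetric n B -> symmetric n (idm_comb a c B).
Proof. by move=> HB i j Hi Hj; rewrite /idm_comb idm_sym HB. Qed.

Definition entry_abs_sum (n : nat) (B : rmat) : R :=
  rsum n (fun i => rsum n (fun j => Rabs (B i j))).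

Lemma bform_unit_bound (n : nat) (B : rmat) (w : nat -> R) :
  sqnorm n w = 1 -> Rabs (bform n B w w) <= entry_abs_sum n B.
Proof.
move=> Hw; apply: Rle_trans (rsum_abs _ _) _; apply: rsum_le => i Hi.
rewrite Rabs_mult; have Hwi := unit_coord n i w Hw Hi.
apply: Rle_trans (Rmult_le_compat_r _ _ _ (Rabs_pos _) Hwi) _; rewrite Rmult_1_l.
apply: Rle_trans (rsum_abs _ _) _; apply: rsum_le => j Hj.
rewrite Rabs_mult; have := unit_coord n j w Hw Hj.
have := Rabs_pos (B i j); have := Rabs_pos (w j); nra.
Qed.

Lemma big_rsum (n : nat) (G : nat -> R) : (\sum_(i < n) G i.+1)%R = rsum n G.
Proof. by elim: n => [|n IH]; rewrite ?big_ord0 // big_ord_recr /= IH. Qed.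

Lemma singular_or_invertible (n : nat) (B : rmat) : (1 <= n)%coq_nat ->
  (exists x : nat -> R, (exists i, inrange n i /\ x i <> 0) /\
     forall j, inrange n j -> rsum n (fun i => x i * B i j) = 0) \/
  (exists C : rmat, forall i j, inrange n i -> inrange n j ->
     rsum n (fun k => B i k * C k j) = idm i j).
Proof.
case: n => [|n _]; first lia.
set M : 'M[R]_n.+1 := (\matrix_(i < n.+1, j < n.+1) B i.+1 j.+1)%R.
have ordK k : inrange n.+1 k -> (inord k.-1 : 'I_n.+1).+1 = k.
{ by move=> Hk; rewrite inordK; lia. }
case: (boolP ((\det M)%R == 0%R)) => Hdet; [left|right].
- move/det0P: Hdet => [v Hv HvM].
  exists (fun k => v ord0 (inord k.-1)); split.
  + case: (boolP [exists i, v ord0 i != 0%R]) => [/existsP [i Hi]|].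
    * by exists i.+1; split; [move: (ltn_ord i); lia|rewrite /= inord_val; apply/eqP].
    * rewrite negb_exists => /forallP Hall; case/negP: Hv; apply/eqP/matrixP => i0 i.
      by rewrite !mxE (ord1 i0); apply/eqP; move: (Hall i); rewrite negbK.
  + move=> j Hj; rewrite -(big_rsum n.+1).
    have /= := congr1 (fun A : 'M[R]_(1, n.+1) => A ord0 (inord j.-1)) HvM.
    rewrite !mxE => H; rewrite -[RHS]H.
    by apply: eq_bigr => i _; rewrite /M mxE inord_val ordK.
- have Hu : M \in unitmx by rewrite unitmxE GRing.unitfE.
  exists (fun a b => invmx M (inord a.-1) (inord b.-1)) => i j Hi Hj.
  rewrite -(big_rsum n.+1).
  have /= := congr1 (fun A : 'M[R]_(n.+1) => A (inord i.-1) (inord j.-1)) (mulmxV Hu).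
  rewrite !mxE.
  have -> : (inord i.-1 == inord j.-1 :> 'I_n.+1) = Nat.eqb i j.
  { apply/eqP; case: (Nat.eqb_spec i j) => [->//|Hij /eqP].
    by rewrite -val_eqE /= !inordK; lia. }
  rewrite /idm; case: (Nat.eqb i j) => H; rewrite -[RHS]H;
    by apply: eq_bigr => k _; rewrite /M mxE inord_val ordK.
Qed.

Lemma bform_scal (n : nat) (B : rmat) (c : R) (w : nat -> R) :
  bform n B (fun i => c * w i) (fun i => c * w i) = c * c * bform n B w w.
Proof.
rewrite /bform /dot /mulmv -rsum_scal; apply: rsum_ext => i _.
rewrite (rsum_ext n _ (fun j => c * (B i j * w j))) ?rsum_scal; [ring|move=> *; ring].
Qed.

Lemma rayleigh_sup (n : nat) (S : rmat) : (1 <= n)%coq_nat ->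
  exists mu, (forall w, bform n S w w <= mu * sqnorm n w) /\
    (forall m, (forall w, sqnorm n w = 1 -> bform n S w w <= m) -> mu <= m).
Proof.
move=> Hn.
set E := fun x => exists w, sqnorm n w = 1 /\ bform n S w w = x.
have Hbound : bound E.
{ exists (entry_abs_sum n S) => x [w [Hw <-]].
  exact: Rle_trans (Rle_abs _) (bform_unit_bound n S w Hw). }
have [mu [Hub Hlub]] := completeness E Hbound (ex_intro _ _ (ex_intro _ e1 (conj (sqnorm_e1 n Hn) erefl))).
exists mu; split; last by move=> m Hm; apply: Hlub => x [w [Hw <-]]; apply: Hm.
move=> w; have Hs := sqnorm_nonneg n w.
case: (Rle_lt_or_eq_dec _ _ Hs) => [Hpos|Hzero].
- set c := / sqrt (sqnorm n w).
  have Hsqrt : 0 < sqrt (sqnorm n w) by apply: sqrt_lt_R0.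
  have Hc : c * c * sqnorm n w = 1 by rewrite /c -Rinv_mult sqrt_sqrt; [field|]; lra.
  have Hc0 : 0 < c * c by rewrite /c; apply: Rmult_lt_0_compat; apply: Rinv_0_lt_compat.
  have := Hub _ (ex_intro _ _ (conj (eq_trans (sqnorm_scal n c w) Hc) erefl)).
  rewrite bform_scal => H.
  apply: (Rmult_le_reg_l (c * c)) => //.
  have -> : c * c * (mu * sqnorm n w) = mu * (c * c * sqnorm n w) by ring.
  by rewrite Hc Rmult_1_r.
- have Hw0 i : inrange n i -> w i = 0 by move=> Hi; have := sqnorm_coord n i w Hi; nra.
  rewrite -Hzero Rmult_0_r; apply: Req_le.
  rewrite /bform /dot -(rsum_zero n); apply: rsum_ext => i Hi.
  by rewrite Hw0 //; ring.
Qed.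

(* A positive semidefinite symmetric matrix P with a right inverse C is
   coercive on the unit sphere: the Cauchy-Schwarz inequality applied to w and
   z = C w gives 1 = <w, P z>^2 <= <w, P w> <z, P z> = <w, P w> <w, C w>. *)
Lemma psd_inverse_coercive (n : nat) (P C : rmat) (w : nat -> R) :
  symmetric n P -> (forall v, 0 <= bform n P v v) ->
  (forall i j, inrange n i -> inrange n j -> rsum n (fun k => P i k * C k j) = idm i j) ->
  sqnorm n w = 1 -> 1 <= bform n P w w * entry_abs_sum n C.
Proof.
move=> HP Hpsd HC Hw.
set z := mulmv n C w.
have HPz i : inrange n i -> mulmv n P z i = w i.
{ move=> Hi; rewrite /mulmv /z /mulmv.
  under rsum_ext => k _ do rewrite -rsum_scal.
  rewrite rsum_swap -(rsum_idm n i w) //; apply: rsum_ext => j Hj.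
  by rewrite -HC // -rsum_scalr; apply: rsum_ext => k _; ring. }
have Hwz : bform n P w z = 1 by rewrite -Hw; apply: rsum_ext => i Hi; rewrite HPz.
have Hzz : bform n P z z = bform n C w w.
{ by rewrite /bform /dot; apply: rsum_ext => i Hi; rewrite HPz // Rmult_comm. }
have := bform_CS n P w z HP Hpsd; rewrite Hwz Hzz.
have := Rle_trans _ _ _ (Rle_abs _) (bform_unit_bound n C w Hw).
have := Hpsd w; nra.
Qed.

(* Rayleigh: a symmetric matrix has an eigenvalue mu bounding its quadratic
   form, namely the supremum above; mu I - S is positive semidefinite, and it
   cannot be invertible because of the coercivity above. *)
Lemma rayleigh (n : nat) (S : rmat) : (1 <= n)%coq_nat -> symmetric n S ->
  exists mu, is_eigenvalue n S mu /\ forall w, bform n S w w <= mu * sqnorm n w.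
Proof.
move=> Hn HS; have [mu [Hq Hleast]] := rayleigh_sup n S Hn.
exists mu; split => //.
set P := idm_comb mu (-1) S.
have HP : symmetric n P by apply: symmetric_idm_comb.
have Hpsd v : 0 <= bform n P v v by rewrite bform_idm_comb; have := Hq v; rewrite /sqnorm; lra.
case: (singular_or_invertible n P Hn) => [[x [Hx Hker]]|[C HC]].
- exists x; split => // i Hi.
  have := Hker i Hi; rewrite (rsum_ext n _ (fun j => P i j * x j)) => [|j Hj]; last first.
  { by rewrite (HP j i) // Rmult_comm. }
  by rewrite -/(mulmv n P x i) mulmv_idm_comb // /mulmv; lra.
- exfalso; set K := entry_abs_sum n C.
  have Hcoer w : sqnorm n w = 1 -> 1 <= bform n P w w * K by apply: psd_inverse_coercive.
  have HK : 0 < K.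
  { have := Hcoer e1 (sqnorm_e1 n Hn); have := Hpsd e1.
    by case: (Rle_lt_dec K 0) => //; nra. }
  suff : mu <= mu - / K by have := Rinv_0_lt_compat K HK; lra.
  apply: Hleast => w Hw; have := Hcoer w Hw.
  rewrite bform_idm_comb -/(sqnorm n w) Hw => H.
  have : / K <= mu - bform n S w w.
  { apply: (Rmult_le_reg_r K) => //; rewrite Rinv_l; lra. }
  lra.
Qed.

Lemma dvdn_divide (d m : nat) : d %| m <-> Nat.divide d m.
Proof.
split; first by move/dvdnP => [q ->]; exists q; rewrite multE.
by move=> [q Hq]; apply/dvdnP; exists q; rewrite -multE.
Qed.

Lemma eqb_mod_dvdn (i k : nat) : Nat.eqb (i mod k) 0 = (k %| i).
Proof.
apply/idP/idP.
- by move/Nat.eqb_eq/Nat.Lcm0.mod_divide/dvdn_divide.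
- by move/dvdn_divide/Nat.Lcm0.mod_divide/Nat.eqb_eq.
Qed.

Lemma Zdivide_nat (d p : nat) :
  (0 < p)%coq_nat -> Z.divide (Z.of_nat d) (Z.of_nat p) -> Nat.divide d p.
Proof.
move=> Hp [z Hz]; have Hz0 : Z.le 0 z by nia.
exists (Z.to_nat z); apply: Nat2Z.inj; rewrite Nat2Z.inj_mul Z2Nat.id //.
Qed.

Lemma prime_Z_of_nat (p : nat) : Znumtheory.prime (Z.of_nat p) <-> prime p.
Proof.
rewrite -prime_alt; split.
- move=> [H1 H2]; apply/primeP; split; first lia.
  move=> d /dvdn_divide Hd; have Hle := Nat.divide_pos_le d p ltac:(lia) Hd.
  have Hd0 : d <> 0%N by move=> Ed; move: Hd => [q]; rewrite Ed; lia.
  case: (Nat.eq_dec d 1) => [->//|H1d]; case: (Nat.eq_dec d p) => [->|Hdp].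
  { by rewrite eqxx orbT. }
  exfalso; apply: (H2 (Z.of_nat d)); first lia.
  by move: Hd => [q ->]; exists (Z.of_nat q); rewrite Nat2Z.inj_mul.
- move/primeP => [H1 H2]; split; first lia.
  move=> z Hz Hdiv; rewrite -(Z2Nat.id z) in Hdiv; last lia.
  move/(Zdivide_nat _ p ltac:(lia))/dvdn_divide/H2: Hdiv => /orP[/eqP|/eqP]; lia.
Qed.

Lemma rprod_ext (n : nat) (f g : nat -> R) :
  (forall k, inrange n k -> f k = g k) -> rprod n f = rprod n g.
Proof.
elim: n => [|n IH] Hfg //=.
rewrite IH ?Hfg //; [lia|] => k Hk; apply: Hfg; lia.
Qed.

Lemma rprod_mult (n : nat) (f g : nat -> R) :
  rprod n (fun k => f k * g k) = rprod n f * rprod n g.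
Proof. elim: n => [|n IH] /=; [lra|rewrite IH; ring]. Qed.

Lemma rprod_extend (N m : nat) (f : nat -> R) :
  (m <= N)%coq_nat -> (forall k, (m < k)%coq_nat -> f k = 1) -> rprod N f = rprod m f.
Proof.
move=> HmN Hf; elim: HmN => [|N' HmN IH] //=.
rewrite IH Hf; [lra|lia].
Qed.

Lemma rprod_single (N p : nat) (c : R) :
  inrange N p -> rprod N (fun q => if q == p then c else 1) = c.
Proof.
move=> Hp; rewrite (rprod_extend N p);
  [|lia|by move=> k Hk; have -> : (k == p) = false by apply/eqP; lia].
case: p Hp => [|p] Hp /=; first lia.
rewrite eqxx (rprod_ext p _ (fun _ => 1)) => [|k Hk]; last first.
{ by have -> : (k == p.+1) = false by apply/eqP; lia. }
by rewrite (rprod_extend p 0) /=; [lra|lia|].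
Qed.

Lemma INR_pos (k : nat) : (0 < k)%N -> 0 < INR k.
Proof. by move=> Hk; apply: lt_0_INR; lia. Qed.

Lemma INR_muln (a b : nat) : INR (a * b)%N = INR a * INR b.
Proof. by rewrite -multE mult_INR. Qed.

Lemma Rpower_1_l (s : R) : Rpower 1 s = 1.
Proof. by rewrite /Rpower ln_1 Rmult_0_r exp_0. Qed.

Definition euler_factor (s : R) (k p : nat) : R :=
  if prime p && (p %| k) then 1 - Rpower (INR p) (- s) else 1.

Lemma Jordan_prodE (s : R) (k : nat) :
  Jordan s k = Rpower (INR k) s * rprod k (euler_factor s k).
Proof.
rewrite /Jordan; congr (_ * _); apply: rprod_ext => p _; rewrite /euler_factor.
case: (prime_dec (Z.of_nat p)) => [/prime_Z_of_nat ->|Hp]; first by rewrite eqb_mod_dvdn.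
by have -> : prime p = false by apply/negP => /prime_Z_of_nat.
Qed.

Lemma euler_factor_large (s : R) (k p : nat) : (0 < k)%N -> (k < p)%coq_nat -> euler_factor s k p = 1.
Proof.
move=> Hk Hp; rewrite /euler_factor.
have -> : (p %| k) = false by apply/negP => /(dvdn_leq Hk); lia.
by rewrite andbF.
Qed.

(* J_s(ab) = J_s(a) J_s(b) for coprime a, b: the Euler factors of ab split
   into those of a and those of b. *)
Lemma Jordan_mul (s : R) (a b : nat) : (0 < a)%N -> (0 < b)%N -> coprime a b ->
  Jordan s (a * b) = Jordan s a * Jordan s b.
Proof.
move=> Ha Hb Hab; rewrite !Jordan_prodE INR_muln -Rpower_mult_distr; try exact: INR_pos.
rewrite (rprod_ext _ _ (fun p => euler_factor s a p * euler_factor s b p)) => [|p _].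
- have Hle_a : (a <= a * b)%coq_nat by have := leq_pmulr a Hb; lia.
  have Hle_b : (b <= a * b)%coq_nat by have := leq_pmull b Ha; lia.
  rewrite rprod_mult (rprod_extend (a * b) a) // => [|k Hk]; last exact: euler_factor_large.
  rewrite (rprod_extend (a * b) b) // => [|k Hk]; last exact: euler_factor_large.
  ring.
- rewrite /euler_factor; case Pp: (prime p) => /=; last ring.
  rewrite Euclid_dvdM //; case Da: (p %| a); case Db: (p %| b) => /=; try ring.
  have : p %| gcdn a b by rewrite dvdn_gcd Da Db.
  by rewrite (eqP Hab) dvdn1 => /eqP E; rewrite E in Pp.
Qed.

(* J_s(p^(a+1)) = p^((a+1)s) - p^(as): the only Euler factor is at p. *)
Lemma Jordan_prime_pow (s : R) (p a : nat) : prime p ->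
  Jordan s (p ^ a.+1) = Rpower (INR (p ^ a.+1)) s - Rpower (INR (p ^ a)) s.
Proof.
move=> Pp; have Hp0 := prime_gt0 Pp.
rewrite Jordan_prodE (rprod_ext _ _ (fun q => if q == p then 1 - Rpower (INR p) (- s) else 1)).
- rewrite rprod_single; last first.
  { have : (p <= p ^ a.+1)%N by rewrite expnS leq_pmulr // expn_gt0 Hp0.
    lia. }
  rewrite expnS INR_muln -Rpower_mult_distr;
    try by apply: INR_pos; rewrite ?expn_gt0 Hp0.
  rewrite Rpower_Ropp.
  have := exp_pos (s * ln (INR p)); rewrite /Rpower => H; field; lra.
- move=> q _; rewrite /euler_factor; case Pq: (prime q) => /=.
  + by rewrite Euclid_dvdX // dvdn_prime2 // andbT; case: eqP => [->|].
  + by have -> : (q == p) = false by apply/eqP => E; rewrite E Pp in Pq.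
Qed.

(* The divisor-sum identity  sum_{k | m} J_s(k) = m^s. *)

Definition divisor_sum (s : R) (N m : nat) : R :=
  rsum N (fun k => if k %| m then Jordan s k else 0).

Lemma divisor_sum_ext (s : R) (N m : nat) :
  (0 < m)%N -> (m <= N)%coq_nat -> divisor_sum s N m = divisor_sum s m m.
Proof.
move=> Hm HN; apply: rsum_extend => // k Hk.
by have -> : (k %| m) = false by apply/negP => /(dvdn_leq Hm); lia.
Qed.

Lemma rsum_multiples (c N : nat) (G : nat -> R) : (0 < c)%N ->
  rsum (c * N) (fun k => if c %| k then G k else 0) = rsum N (fun t => G (c * t)%N).
Proof.
move=> Hc; elim: N => [|N IH]; first by rewrite muln0.
rewrite mulnS addnC rsum_add IH /=; congr (_ + _).
rewrite -(rsum_idm c c (fun _ => G (c * N.+1)%N)); last lia.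
apply: rsum_ext => i Hi; rewrite dvdn_addr ?dvdn_mulr // /idm.
case: (Nat.eqb_spec c i) => [<-|Hne]; first by rewrite dvdnn mulnS addnC; ring.
have -> : (c %| i) = false by apply/negP => /dvdn_leq; lia.
ring.
Qed.

Lemma divisor_split (p r b k : nat) : prime p -> coprime p r -> (0 < k)%N ->
  (k %| p ^ b.+1 * r) = (k %| p ^ b * r) || (p ^ b.+1 %| k) && (k %| p ^ b.+1 * r) /\
  ~~ ((k %| p ^ b * r) && (p ^ b.+1 %| k)).
Proof.
move=> Pp Hpr Hk; have Hp0 := prime_gt0 Pp.
have Hsub : k %| p ^ b * r -> k %| p ^ b.+1 * r.
{ by move/dvdn_trans; apply; rewrite expnS -mulnA dvdn_mull. }
have Hexcl : ~~ ((k %| p ^ b * r) && (p ^ b.+1 %| k)).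
{ apply/negP => /andP [HY HZ]; have := dvdn_trans HZ HY.
  rewrite expnS mulnC dvdn_pmul2l ?expn_gt0 ?Hp0 // => Hpr'.
  have : p %| gcdn p r by rewrite dvdn_gcd dvdnn.
  by rewrite (eqP Hpr) dvdn1 => /eqP E; rewrite E in Pp. }
split => //.
case HY: (k %| p ^ b * r); first by rewrite Hsub.
case HZ: (p ^ b.+1 %| k) => //=; apply/negP => HX; move/negP: HY; apply.
case: (pfactor_coprime Pp Hk) => k' Hk' Ek; set e := logn p k in Ek.
rewrite Ek in HX HZ *.
have Hk'r : k' %| r.
{ have := dvdn_trans (dvdn_mulr _ (dvdnn k')) HX.
  by rewrite mulnC Gauss_dvdl // coprimeXr // coprime_sym. }
have Heb : (e <= b)%N.
{ have := dvdn_trans (dvdn_mull k' (dvdnn (p ^ e))) HX.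
  rewrite Gauss_dvdl ?coprimeXl // dvdn_Pexp2l ?prime_gt1 // => Hle.
  case: (leqP e b) => // Hlt; have Heq : e = b.+1 by lia.
  by rewrite -HZ -Heq dvdn_mull. }
by rewrite mulnC dvdn_mul // dvdn_exp2l.
Qed.

(* Splitting the divisors of p^(b+1) r as in [divisor_split]: those that are
   multiples of p^(b+1) are p^(b+1) t with t | r. *)
Lemma divisor_sum_step (s : R) (p r b : nat) : prime p -> coprime p r -> (0 < r)%N ->
  divisor_sum s (p ^ b.+1 * r) (p ^ b.+1 * r) =
  divisor_sum s (p ^ b * r) (p ^ b * r) + Jordan s (p ^ b.+1) * divisor_sum s r r.
Proof.
move=> Pp Hpr Hr; have Hp0 := prime_gt0 Pp.
have Hc : (0 < p ^ b.+1)%N by rewrite expn_gt0 Hp0.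
have Hcb : (0 < p ^ b)%N by rewrite expn_gt0 Hp0.
set c := (p ^ b.+1)%N.
rewrite {1}/divisor_sum (rsum_ext _ _ (fun k => (if k %| p ^ b * r then Jordan s k else 0) +
     (if c %| k then (if k %| c * r then Jordan s k else 0) else 0))) => [|k Hk].
- rewrite rsum_plus; congr (_ + _).
  + apply: divisor_sum_ext; first by rewrite muln_gt0 Hcb Hr.
    have : (p ^ b <= c)%N by rewrite /c expnS leq_pmull.
    by rewrite -(leq_pmul2r Hr); lia.
  + rewrite rsum_multiples // -rsum_scal; apply: rsum_ext => t Ht.
    rewrite dvdn_pmul2l //; case Htr: (t %| r); last ring.
    rewrite Jordan_mul //; first lia.
    by apply: coprimeXl; apply: coprime_dvdr Htr Hpr.
- have [-> Hexcl] := divisor_split p r b k Pp Hpr ltac:(lia).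
  move: Hexcl; rewrite -/c.
  by case: (k %| p ^ b * r); case: (c %| k); case: (k %| c * r) => //= _; ring.
Qed.

Lemma divisor_sum_prime_pow (s : R) (p r a : nat) : prime p -> coprime p r -> (0 < r)%N ->
  divisor_sum s (p ^ a * r) (p ^ a * r) = Rpower (INR (p ^ a)) s * divisor_sum s r r.
Proof.
move=> Pp Hpr Hr; elim: a => [|b IH]; first by rewrite expn0 mul1n /= Rpower_1_l; ring.
by rewrite divisor_sum_step // IH Jordan_prime_pow //; ring.
Qed.

(* Gauss' identity for the Jordan totient, by strong induction on m: split
   off the full power of the smallest prime divisor of m. *)
Lemma Jordan_divisor_sum (s : R) (m : nat) : (0 < m)%N -> divisor_sum s m m = Rpower (INR m) s.
Proof.
elim/ltn_ind: m => m IH Hm.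
case: (ltngtP m 1) => Hm1; first lia.
- have Pp := pdiv_prime Hm1; set p := pdiv m in Pp.
  case: (pfactor_coprime Pp Hm) => r Hpr Er; set e := logn p m in Er.
  have Hr : (0 < r)%N by case: r Hpr Er => // _ Er; lia.
  have He : (0 < e)%N by rewrite /e logn_gt0 mem_primes Pp Hm pdiv_dvd.
  have Hrm : (r < m)%N.
  { have Hp1 := prime_gt1 Pp.
    have : (p <= p ^ e)%N by rewrite -{1}(expn1 p) leq_exp2l.
    by rewrite Er; nia. }
  rewrite Er mulnC divisor_sum_prime_pow // IH // INR_muln Rpower_mult_distr //;
    apply: INR_pos => //; by rewrite expn_gt0 prime_gt0.
- rewrite Hm1 /divisor_sum /= Jordan_prodE /= /euler_factor /= Rpower_1_l; ring.
Qed.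

(* The factorization A = D E diag(J_{alpha-beta}) E^T D, entrywise. *)

Lemma gcd_gcdn (i j : nat) : Nat.gcd i j = gcdn i j.
Proof.
apply: Nat.gcd_unique; try by apply/dvdn_divide; rewrite ?dvdn_gcdl ?dvdn_gcdr.
by move=> q /dvdn_divide Hi /dvdn_divide Hj; apply/dvdn_divide; rewrite dvdn_gcd Hi Hj.
Qed.

Lemma lcm_lcmn (i j : nat) : Nat.lcm i j = lcmn i j.
Proof.
apply: Nat.Lcm0.lcm_unique; try by apply/dvdn_divide; rewrite ?dvdn_lcml ?dvdn_lcmr.
by move=> q /dvdn_divide Hi /dvdn_divide Hj; apply/dvdn_divide; rewrite dvdn_lcm Hi Hj.
Qed.

Lemma Emat_dvdn (i k : nat) : Emat i k = if k %| i then 1 else 0.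
Proof. by rewrite /Emat eqb_mod_dvdn. Qed.

(* sum_k E_ik E_jk J_s(k) = sum_{k | (i,j)} J_s(k) = (i,j)^s. *)
Lemma gcd_power_sum (s : R) (n i j : nat) : inrange n i -> inrange n j ->
  rsum n (fun k => Emat i k * Emat j k * Jordan s k) = Rpower (INR (Nat.gcd i j)) s.
Proof.
move=> Hi Hj; rewrite gcd_gcdn.
have Hg : (0 < gcdn i j)%N by rewrite gcdn_gt0; apply/orP; left; lia.
have : (gcdn i j <= i)%N by apply: dvdn_leq; [lia|apply: dvdn_gcdl].
move=> Hgi; rewrite -Jordan_divisor_sum // -(divisor_sum_ext s n) //; last lia.
apply: rsum_ext => k _; rewrite !Emat_dvdn dvdn_gcd.
by case: (k %| i); case: (k %| j) => /=; ring.
Qed.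

(* (i,j)^alpha [i,j]^beta = i^beta j^beta (i,j)^(alpha - beta), as (i,j)[i,j] = i j. *)
Lemma Amat_factor (alpha beta : R) (n i j : nat) : inrange n i -> inrange n j ->
  Amat alpha beta i j = Rpower (INR i) beta * Rpower (INR j) beta *
     rsum n (fun k => Emat i k * Emat j k * Jordan (alpha - beta) k).
Proof.
move=> Hi Hj; rewrite gcd_power_sum // /Amat gcd_gcdn lcm_lcmn.
have Hg : (0 < gcdn i j)%N by rewrite gcdn_gt0; apply/orP; left; lia.
have Hl : (0 < lcmn i j)%N by rewrite lcmn_gt0; apply/andP; split; apply/ltP; lia.
have -> : Rpower (INR (gcdn i j)) alpha =
          Rpower (INR (gcdn i j)) (alpha - beta) * Rpower (INR (gcdn i j)) beta.
{ by rewrite -Rpower_plus; congr Rpower; ring. }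
have Hgl : Rpower (INR (gcdn i j)) beta * Rpower (INR (lcmn i j)) beta =
            Rpower (INR i) beta * Rpower (INR j) beta.
{ rewrite !Rpower_mult_distr; try by apply: INR_pos; lia.
  by rewrite -!INR_muln mulnC muln_lcm_gcd. }
by rewrite Rmult_assoc Hgl; ring.
Qed.

Lemma Rpower_range (n i : nat) (c : R) : inrange n i ->
  Rmin 1 (Rpower (INR n) c) <= Rpower (INR i) c <= Rmax 1 (Rpower (INR n) c).
Proof.
move=> Hi; have Hi1 : 1 <= INR i by apply: (le_INR 1); lia.
have Hin : INR i <= INR n by apply: le_INR; lia.
have mono d : 0 <= d -> 1 <= Rpower (INR i) d <= Rpower (INR n) d.
{ by move=> Hd; rewrite -(Rpower_1_l d); split; apply: Rle_Rpower_l; lra. }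
have := Rmin_l 1 (Rpower (INR n) c); have := Rmin_r 1 (Rpower (INR n) c).
have := Rmax_l 1 (Rpower (INR n) c); have := Rmax_r 1 (Rpower (INR n) c).
case: (Rle_lt_dec 0 c) => Hc; first by have := mono c Hc; lra.
have [H1 H2] := mono (- c) ltac:(lra).
have inv k : Rpower (INR k) c = / Rpower (INR k) (- c).
{ by rewrite -Rpower_Ropp Ropp_involutive. }
rewrite !inv.
have : / Rpower (INR i) (- c) <= 1 by rewrite -Rinv_1; apply: Rinv_le_contravar; lra.
have : / Rpower (INR n) (- c) <= / Rpower (INR i) (- c) by apply: Rinv_le_contravar; lra.
lra.
Qed.

Definition tmulmv (n : nat) (B : rmat) (z : nat -> R) (k : nat) : R :=
  rsum n (fun i => B i k * z i).
Definition gram (n : nat) (B : rmat) : rmat := fun i j => rsum n (fun k => B k i * B k j).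

Lemma gram_symmetric (n : nat) (B : rmat) : symmetric n (gram n B).
Proof. by move=> i j _ _; apply: rsum_ext => k _; ring. Qed.

Lemma dot_tmulmv (n : nat) (B : rmat) (z y : nat -> R) :
  dot n (tmulmv n B z) y = dot n z (mulmv n B y).
Proof.
rewrite /dot /tmulmv /mulmv.
under rsum_ext => k _ do rewrite -rsum_scalr.
rewrite rsum_swap; apply: rsum_ext => i _.
by rewrite -rsum_scal; apply: rsum_ext => k _; ring.
Qed.

Lemma sqnorm_mulmv (n : nat) (B : rmat) (y : nat -> R) :
  sqnorm n (mulmv n B y) = bform n (gram n B) y y.
Proof.
rewrite /sqnorm -dot_tmulmv /dot /tmulmv /bform /dot /mulmv /gram.
apply: rsum_ext => i _.
transitivity (rsum n (fun k => rsum n (fun j => y i * (B k i * B k j * y j)))).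
- rewrite -rsum_scalr; apply: rsum_ext => k _.
  by rewrite -rsum_scal -rsum_scalr; apply: rsum_ext => j _; ring.
- rewrite rsum_swap -rsum_scal; apply: rsum_ext => j _.
  by rewrite -rsum_scalr rsum_scal.
Qed.

(* If T bounds the quadratic form of B^T B, then |B^T z|^2 <= T |z|^2: with
   y = B^T z, Cauchy-Schwarz gives |y|^4 = <z, B y>^2 <= |z|^2 |B y|^2 <= T |z|^2 |y|^2. *)
Lemma tmulmv_bound (n : nat) (B : rmat) (T : R) (z : nat -> R) :
  0 <= T -> (forall y, bform n (gram n B) y y <= T * sqnorm n y) ->
  sqnorm n (tmulmv n B z) <= T * sqnorm n z.
Proof.
move=> HT Hgram; set y := tmulmv n B z.
have Hyy : sqnorm n y = dot n z (mulmv n B y) by rewrite /sqnorm dot_tmulmv.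
have HCS := dot_CS n z (mulmv n B y).
rewrite -Hyy sqnorm_mulmv in HCS.
have := Hgram y; have := sqnorm_nonneg n y; have := sqnorm_nonneg n z.
case: (Rle_lt_or_eq_dec 0 (sqnorm n y) (sqnorm_nonneg n y)) => [Hy|<-]; last nra.
move=> Hz _ Hb; apply: (Rmult_le_reg_l (sqnorm n y)) => //; nra.
Qed.

Lemma largest_eigenvalue_bound (n : nat) (S : rmat) (T : R) :
  (1 <= n)%coq_nat -> symmetric n S -> is_largest_eigenvalue n S T ->
  forall w, bform n S w w <= T * sqnorm n w.
Proof.
move=> Hn HS [_ Hmax] w; have [mu [Hmu Hq]] := rayleigh n S Hn HS.
have := Hq w; have := Hmax mu Hmu; have := sqnorm_nonneg n w; nra.
Qed.

(* The largest eigenvalue of a Gram matrix is nonnegative, since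
   0 <= |B e1|^2 <= T |e1|^2 = T. *)
Lemma gram_largest_eigenvalue_nonneg (n : nat) (B : rmat) (T : R) :
  (1 <= n)%coq_nat -> is_largest_eigenvalue n (gram n B) T -> 0 <= T.
Proof.
move=> Hn HT; have := largest_eigenvalue_bound n _ T Hn (gram_symmetric n B) HT e1.
by rewrite -sqnorm_mulmv sqnorm_e1 // => H; have := sqnorm_nonneg n (mulmv n B e1); lra.
Qed.

Lemma bform_factor (n : nat) (A E : rmat) (d J u : nat -> R) :
  (forall i j, inrange n i -> inrange n j ->
     A i j = d i * d j * rsum n (fun k => E i k * E j k * J k)) ->
  bform n A u u = rsum n (fun k => J k * (tmulmv n E (fun i => d i * u i) k *
                                           tmulmv n E (fun i => d i * u i) k)).
Proof.
move=> HA; rewrite /bform /dot /mulmv /tmulmv.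
transitivity (rsum n (fun i => rsum n (fun k => rsum n (fun j =>
   E i k * (d i * u i) * (J k * (E j k * (d j * u j))))))).
{ apply: rsum_ext => i Hi; rewrite -rsum_scal -rsum_swap; apply: rsum_ext => j Hj.
  rewrite HA // -rsum_scal -rsum_scalr -rsum_scal; apply: rsum_ext => k _; ring. }
rewrite rsum_swap; apply: rsum_ext => k _.
rewrite (rsum_ext n _ (fun i => E i k * (d i * u i) *
           (J k * rsum n (fun j => E j k * (d j * u j))))) ?rsum_scalr => [|i _]; first ring.
by rewrite -!rsum_scal.
Qed.

Lemma rmaxn_ge (n k : nat) (f : nat -> R) : inrange n k -> f k <= rmaxn n f.
Proof.
elim: n => [|n IH] Hk /=; first lia.
case: (Nat.eq_dec k n.+1) => [->|Hne]; first exact: Rmax_r.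
by apply: Rle_trans (Rmax_l _ _); apply: IH; lia.
Qed.

Lemma rmaxn_nonneg (n : nat) (f : nat -> R) : (forall k, 0 <= f k) -> 0 <= rmaxn n f.
Proof.
move=> Hf; elim: n => [|n IH] /=; first lra.
exact: Rle_trans IH (Rmax_l _ _).
Qed.

Lemma weighted_squares_bound (n : nat) (J y : nat -> R) :
  rsum n (fun k => J k * (y k * y k)) <= rmaxn n (fun i => Rabs (J i)) * sqnorm n y.
Proof.
rewrite /sqnorm /dot -rsum_scal; apply: rsum_le => k Hk.
have := rmaxn_ge n k (fun i => Rabs (J i)) Hk; have := Rle_abs (J k).
have : 0 <= y k * y k by nra.
nra.
Qed.

Lemma power_scaling_bound (n : nat) (beta : R) (u : nat -> R) :
  sqnorm n (fun i => Rpower (INR i) beta * u i) <= Rmax 1 (Rpower (INR n) (2 * beta)) * sqnorm n u.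
Proof.
rewrite /sqnorm /dot -rsum_scal; apply: rsum_le => i Hi.
have -> : Rpower (INR i) beta * u i * (Rpower (INR i) beta * u i) =
          Rpower (INR i) (2 * beta) * (u i * u i).
{ by rewrite (_ : 2 * beta = beta + beta) ?Rpower_plus; [ring|ring]. }
have [_ H] := Rpower_range n i (2 * beta) Hi; have : 0 <= u i * u i by nra.
nra.
Qed.

Lemma Amat_form_bound (n : nat) (alpha beta T : R) (u : nat -> R) :
  0 <= T -> (forall y, bform n (EtE n) y y <= T * sqnorm n y) ->
  bform n (Amat alpha beta) u u <=
  T * Rmax 1 (Rpower (INR n) (2 * beta)) *
    rmaxn n (fun i => Rabs (Jordan (alpha - beta) i)) * sqnorm n u.
Proof.
move=> HT HEtE.
set mJ := rmaxn n _; set dmax := Rmax 1 _; set z := fun i => Rpower (INR i) beta * u i.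
have HmJ : 0 <= mJ.
{ by apply: rmaxn_nonneg => k; apply: Rabs_pos. }
rewrite (bform_factor n _ Emat (fun i => Rpower (INR i) beta) (Jordan (alpha - beta)) u);
  last exact: Amat_factor.
apply: Rle_trans (weighted_squares_bound _ _ _) _; rewrite -/mJ -/z.
have Hy := tmulmv_bound n Emat T z HT HEtE.
have Hz := power_scaling_bound n beta u; rewrite -/z -/dmax in Hz.
apply: Rle_trans (Rmult_le_compat_l _ _ _ HmJ (Rle_trans _ _ _ Hy (Rmult_le_compat_l _ _ _ HT Hz))) _.
by apply: Req_le; ring.
Qed.

(* For a matrix with nonnegative entries and an eigenpair (mu, x), taking
   absolute values row by row gives |mu| |x|_i <= (B |x|)_i, hence
   |mu| | |x| |^2 <= <|x|, B |x|>. *)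
Lemma nonneg_eigen_bound (n : nat) (B : rmat) (x : nat -> R) (mu : R) :
  (forall i j, inrange n i -> 0 <= B i j) ->
  (forall i, inrange n i -> mulmv n B x i = mu * x i) ->
  Rabs mu * sqnorm n (fun i => Rabs (x i)) <=
    bform n B (fun i => Rabs (x i)) (fun i => Rabs (x i)).
Proof.
move=> HB Heig; rewrite /sqnorm /dot -rsum_scal; apply: rsum_le => i Hi.
have Hrow : Rabs mu * Rabs (x i) <= mulmv n B (fun j => Rabs (x j)) i.
{ rewrite -Rabs_mult -Heig //; apply: Rle_trans (rsum_abs _ _) _.
  apply: rsum_le => j _; rewrite Rabs_mult Rabs_right; [lra|exact/Rle_ge/HB]. }
have := Rabs_pos (x i); nra.
Qed.

(* A - m0 I has nonnegative entries for m0 = min(1, n^(alpha+beta)): the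
   off-diagonal entries are positive and the diagonal ones are i^(alpha+beta) >= m0. *)
Lemma Amat_shift_nonneg (n : nat) (alpha beta : R) (i j : nat) : inrange n i ->
  0 <= idm_comb (- Rmin 1 (Rpower (INR n) (alpha + beta))) 1 (Amat alpha beta) i j.
Proof.
move=> Hi; rewrite /idm_comb /idm /Amat; case: (Nat.eqb_spec i j) => [<-|_].
- rewrite Nat.gcd_diag Nat.lcm_diag -Rpower_plus.
  by have [Hm _] := Rpower_range n i (alpha + beta) Hi; lra.
- rewrite /Rpower; have := exp_pos (alpha * ln (INR (Nat.gcd i j))).
  by have := exp_pos (beta * ln (INR (Nat.lcm i j))); nra.
Qed.

Theorem theorem3p2 (n : nat) (alpha beta : R) (Tn : R) :
  (1 <= n)%coq_nat ->
  is_largest_eigenvalue n (EtE n) Tn ->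
  forall lam : R, is_eigenvalue n (Amat alpha beta) lam ->
  let M := Tn * Rmax 1 (Rpower (INR n) (2 * beta)) *
           rmaxn n (fun i => Rabs (Jordan (alpha - beta) i)) in
  2 * Rmin 1 (Rpower (INR n) (alpha + beta)) - M <= lam <= M.
Proof.
move=> Hn HT lam [x [[i0 [Hi0 Hx0]] Heig]] M.
set m0 := Rmin 1 (Rpower (INR n) (alpha + beta)).
set u := fun i => Rabs (x i).
have Hu : 0 < sqnorm n u.
{ have := sqnorm_coord n i0 u Hi0; have := Rabs_pos_lt _ Hx0; rewrite /u; nra. }
have HA : bform n (Amat alpha beta) u u <= M * sqnorm n u.
{ apply: Amat_form_bound; first exact: gram_largest_eigenvalue_nonneg HT.
  exact: largest_eigenvalue_bound Hn (gram_symmetric n Emat) HT. }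
(* (A - m0 I) x = (lam - m0) x with A - m0 I entrywise nonnegative *)
have := nonneg_eigen_bound n _ x (lam - m0) (Amat_shift_nonneg n alpha beta).
rewrite bform_idm_comb -/u -/m0 -/(sqnorm n u) => Hbound.
have {Hbound} : Rabs (lam - m0) * sqnorm n u <= (M - m0) * sqnorm n u.
{ apply: Rle_trans (Hbound _) _ => [i Hi|]; first by rewrite mulmv_idm_comb // /mulmv Heig //; ring.
  lra. }
move/(Rmult_le_reg_r _ _ _ Hu) => Hlam.
have := Rle_abs (lam - m0); have := Rle_abs (- (lam - m0)); rewrite Rabs_Ropp; lra.
Qed.
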